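(* Let $G=(V,E)$ be an unweighted graph with $n$ vertices and let $k\geq 2$ be an integer. Run the clustering defined in the context with $r=k-1$ and $p=1-n^{-1/k}$. Let $T=\{(p_{c_x}(x),x): x\in V,\ x\neq c_x\}$ be the support forest and let $F=\bigcup_{x\in V}C(x)$, where $C(x)=\{(x,p_u(x)) : u\neq x,\ d^{(u)}(s,x)=d_{G'}(s,x)\}\cup\{(x,p_u(x)) : u\neq x,\ d^{(u)}(s,x)=d_{G'}(s,x)+1,\ \mathrm{ID}(u)<\mathrm{ID}(c_x)\}$. Then, for every outcome of the sampled values, $H=(V,T\cup F)$ is a spanner of $G$ of stretch $2k-1$, i.e., $d_H(u,v)\leq (2k-1)\,d_G(u,v)$ for all $u,v\in V$.
   Context: Setting (the clustering): $G=(V,E)$ is an unweighted graph with shortest-path distance $d_G$, and each vertex has a distinct identifier $\mathrm{ID}(v)$. Let $p\in(0,1)$ and $r\in\mathbb{N}$. Let $\mathrm{GeomCap}(p,r)$ be the distribution on $\{0,\dots,r\}$ with $\Pr[=i]=p(1-p)^i$ for $0\leq i\leq r-1$ and $\Pr[=r]=(1-p)^r$. Each vertex $v$ independently samples $\delta_v\sim\mathrm{GeomCap}(p,r)$. For $u,x\in V$ define $d^{(u)}(s,x):=r-\delta_u+d_G(u,x)$ and the level $d_{G'}(s,x):=\min_{u\in V} d^{(u)}(s,x)$. The cluster center $c_x$ of $x$ is the vertex $u$ with smallest $\mathrm{ID}$ among those with $d^{(u)}(s,x)=d_{G'}(s,x)$. For $u\neq x$ with $d_G(u,x)<\infty$,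 $p_u(x)$ denotes the predecessor of $x$ on an arbitrary but fixed shortest path from $u$ to $x$ in $G$. *)

From mathcomp Require Import all_boot.
Set Implicit Arguments. Unset Strict Implicit. Unset Printing Implicit Defensive.

Section Graph.
Variable V : finType.

Fixpoint nbhd (e : rel V) (n : nat) (u : V) : {set V} :=
  match n with
  | 0 => [set u]
  | n'.+1 => nbhd e n' u :|: [set y | [exists x in nbhd e n' u, e x y]]
  end.

(* Shortest-path distance d(u,v): Some d if v is reachable from u (then
   d < #|V|), None (= infinity) otherwise. *)
Definition dist (e : rel V) (u v : V) : option nat :=
  let i := find (fun i => v \in nbhd e i u) (iota 0 #|V|) in
  if i < #|V| then Some i else None.

(* a <= c * b in N u {infinity}, with None = infinity. *)
Definition oleq_mul (a : option nat) (c : nat) (b : option nat) : Prop :=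
  match b with
  | None => True
  | Some db => exists2 da, a = Some da & da <= c * db
  end.

(* pr u x = p_u(x): predecessor of x on a (fixed) shortest u-x path. *)
Definition is_pred_fun (e : rel V) (pr : V -> V -> V) : Prop :=
  forall u x d, u != x -> dist e u x = Some d ->
    e (pr u x) x /\ dist e u (pr u x) = Some d.-1.

Variables (e : rel V) (ID : V -> nat) (r : nat) (delta : V -> nat)
          (pr : V -> V -> V).

(* d^{(u)}(s,x) = r - delta_u + d_G(u,x)  (None = infinity) *)
Definition du (u x : V) : option nat :=
  omap (fun d => r - delta u + d) (dist e u x).

(* d_{G'}(s,x) = min_u d^{(u)}(s,x); finite since d^{(x)}(s,x) = r - delta_x. *)
Definition lvl (x : V) : nat :=
  \big[minn/(r - delta x)]_(u : V)
     (match du u x with Some d => d | None => r - delta x end).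

Definition is_center (x c : V) : bool :=
  (du c x == Some (lvl x)) &&
  [forall u, (du u x == Some (lvl x)) ==> (ID c <= ID u)].

Definition inT (a b : V) : bool :=
  [exists c, is_center b c && (c != b) && (a == pr c b)].

Definition inC (x y : V) : bool :=
  [exists u, (u != x) && (y == pr u x) &&
     ((du u x == Some (lvl x)) ||
      ((du u x == Some (lvl x).+1) &&
        [exists c, is_center x c && (ID u < ID c)]))].

Definition inTF (a b : V) : bool := inT a b || inC a b.

Definition spannerH : rel V := fun a b => inTF a b || inTF b a.

End Graph.

From Pilot Require Import Defs.
From mathcomp Require Import all_boot order zify.
Set Implicit Arguments. Unset Strict Implicit. Unset Printing Implicit Defensive.
Import Order.TTheory.

(* Call u a candidate for x when the edge (x, p_u(x)) is put in C(x). Being a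
   candidate is inherited along shortest paths: if u is a candidate for x, it
   is one for p_u(x), since levels change by at most one along an edge, and
   when the level drops the cluster center of p_u(x) attains the level of x,
   so its ID is at least ID(c_x) > ID(u). Hence H contains a shortest path from
   x to each of its candidates. For an edge xy of G with ID(c_x) <= ID(c_y),
   c_x is a candidate for both x and y if x has the smaller level, and c_y is
   otherwise; the two distances are at most r and r + 1, so x and y are at
   distance at most 2r + 1 = 2k - 1 in H. *)

Section Balls.
Variables (V : finType) (f : rel V).

Lemma nbhd_refl n u : u \in nbhd f n u.
Proof. by elim: n => [|n IH] /=; rewrite ?in_set1 // in_setU IH. Qed.

Lemma nbhdS n u v :
  (v \in nbhd f n.+1 u) = (v \in nbhd f n u) || [exists x in nbhd f n u, f x v].
Proof. by rewrite /= in_setU inE. Qed.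

Lemma nbhd_mono m n u : m <= n -> nbhd f m u \subset nbhd f n u.
Proof.
apply: (@homo_leq _ (nbhd f ^~ u) (fun A B => A \subset B)) => [A | B A C | i].
- exact: subxx.
- exact: subset_trans.
- exact: subsetUl.
Qed.

Lemma nbhd_trans m n a b c :
  b \in nbhd f m a -> c \in nbhd f n b -> c \in nbhd f (m + n) a.
Proof.
move=> ab; elim: n c => [|n IH] c; first by rewrite in_set1 addn0 => /eqP ->.
rewrite addnS !nbhdS => /orP[/IH -> // | /existsP[x /andP[/IH bx fxc]]].
by apply/orP; right; apply/existsP; exists x; rewrite bx.
Qed.

Lemma nbhd_edge a b : f a b -> b \in nbhd f 1 a.
Proof.
by move=> fab; rewrite nbhdS; apply/orP; right; apply/existsP; exists a; rewrite nbhd_refl.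
Qed.

Lemma nbhd_sym : symmetric f -> forall n a b, b \in nbhd f n a -> a \in nbhd f n b.
Proof.
move=> f_sym; elim=> [|n IH] a b; first by rewrite !in_set1 eq_sym.
rewrite nbhdS => /orP[/IH ba | /existsP[x /andP[/IH xa fxb]]].
  exact: subsetP (nbhd_mono _ (leqnSn n)) _ ba.
by rewrite -add1n; apply: nbhd_trans xa; apply: nbhd_edge; rewrite f_sym.
Qed.

Lemma nbhd_path u p : path f u p -> last u p \in nbhd f (size p) u.
Proof.
elim/last_ind: p => [|p x IH]; first by rewrite nbhd_refl.
rewrite rcons_path last_rcons size_rcons nbhdS => /andP[/IH up fx].
by apply/orP; right; apply/existsP; exists (last u p); rewrite up.
Qed.

Lemma path_of_nbhd n u v :
  v \in nbhd f n u -> exists p, [/\ path f u p, last u p = v & size p <= n].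
Proof.
elim: n v => [|n IH] v; first by rewrite in_set1 => /eqP ->; exists [::].
rewrite nbhdS => /orP[/IH[p [up pv sp]] | /existsP[x /andP[/IH[p [up px sp]] fxv]]].
  by exists p; split=> //; apply: leqW.
exists (rcons p v); split; rewrite ?last_rcons ?size_rcons //.
by rewrite rcons_path up px fxv.
Qed.

Lemma find_iota_le (a : pred nat) N m : m < N -> a m -> find a (iota 0 N) <= m.
Proof.
move=> mN am; rewrite -ltnS; apply: find_ltn; rewrite take_iota.
by apply/hasP; exists m; rewrite // mem_iota; lia.
Qed.

Lemma dist_nbhd u v d : dist f u v = Some d -> v \in nbhd f d u.
Proof.
rewrite /dist /=; case: ifP => // lt_find [<-].
have has_a : has (fun i => v \in nbhd f i u) (iota 0 #|V|).
  by rewrite has_find size_iota.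
by have := nth_find 0 has_a; rewrite nth_iota ?add0n.
Qed.

(* A walk of length n shortens to a simple path, of length < #|V|, which is
   within the range searched by [dist]. *)
Lemma dist_of_nbhd n u v : v \in nbhd f n u -> exists2 d, dist f u v = Some d & d <= n.
Proof.
move=> vn; have [p [up pv _]] := path_of_nbhd vn.
case: (shortenP up) pv => q uq q_uniq _ qv.
have q_small : size q < #|V| by move/card_uniqP: q_uniq => /= <-; exact: max_card.
have vq : v \in nbhd f (size q) u by rewrite -qv nbhd_path.
rewrite /dist /=; set i := find _ _.
have le_iq : i <= size q by apply: find_iota_le vq.
rewrite ifT; last exact: leq_ltn_trans q_small.
exists i => //; case: (ltnP n #|V|) => [nV | Vn]; [exact: find_iota_le vn | lia].
Qed.

Lemma dist_self u : dist f u u = Some 0.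
Proof. by have [[|d] -> ] := dist_of_nbhd (nbhd_refl 0 u). Qed.

Lemma dist_succ_neq u x d : dist f u x = Some d.+1 -> u != x.
Proof. by apply: contra_eq_neq => ->; rewrite dist_self. Qed.

Lemma dist_edge u x y d : dist f u x = Some d -> f x y ->
  exists2 d', dist f u y = Some d' & d' <= d.+1.
Proof.
move=> /dist_nbhd ux /nbhd_edge xy.
by have := nbhd_trans ux xy; rewrite addn1; apply: dist_of_nbhd.
Qed.

End Balls.

Lemma nbhd_stretch (V : finType) (f g : rel V) c :
  (forall x y, f x y -> y \in nbhd g c x) ->
  forall n u v, v \in nbhd f n u -> v \in nbhd g (c * n) u.
Proof.
move=> fg; elim=> [|n IH] u v; first by rewrite in_set1 => /eqP ->; exact: nbhd_refl.
rewrite nbhdS mulnS addnC => /orP[/IH | /existsP[x /andP[/IH ux /fg xv]]].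
  by apply: subsetP; apply: nbhd_mono; apply: leq_addr.
exact: nbhd_trans ux xv.
Qed.

Lemma dist_stretch (V : finType) (f g : rel V) c :
  (forall x y, f x y -> y \in nbhd g c x) ->
  forall u v, oleq_mul (dist g u v) c (dist f u v).
Proof.
move=> fg u v; case duv: (dist f u v) => [d|] //=.
have [d' -> le_d'] := dist_of_nbhd (nbhd_stretch fg (dist_nbhd duv)).
by exists d'.
Qed.

Section Clustering.
Variables (V : finType) (e : rel V) (ID : V -> nat) (r : nat) (delta : V -> nat)
  (pr : V -> V -> V).
Hypotheses (e_sym : symmetric e) (ID_inj : injective ID) (pr_pred : is_pred_fun e pr).

Local Notation du := (du e r delta).
Local Notation lvl := (lvl e r delta).
Local Notation is_center := (is_center e ID r delta).
Local Notation H := (spannerH e ID r delta pr).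

Lemma du_dist u x d : dist e u x = Some d -> du u x = Some (r - delta u + d).
Proof. by rewrite /Defs.du => ->. Qed.

Lemma du_Some u x m : du u x = Some m ->
  exists2 d, dist e u x = Some d & m = r - delta u + d.
Proof. by rewrite /Defs.du; case: (dist e u x) => // d [<-]; exists d. Qed.

Lemma lvl_le_du u x m : du u x = Some m -> lvl x <= m.
Proof. by move=> dux; apply: leq_trans (@bigmin_le _ nat _ _ u _) _; rewrite dux. Qed.

Lemma lvl_le_r x : lvl x <= r.
Proof. exact: leq_trans (@bigmin_le_id _ nat _ _ _ _ _) (leq_subr _ _). Qed.

Lemma lvl_attained x : exists u, du u x = Some (lvl x).
Proof.
have dxx : du x x = Some (r - delta x) by rewrite (du_dist (dist_self e x)) addn0.
rewrite /Defs.lvl.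
apply: (big_ind (fun m => exists u, du u x = Some m)) => [|a b [u dua] [v dvb] | u _] /=.
- by exists x.
- by rewrite /minn; case: ltnP; [exists u | exists v].
- by case dux: (du u x) => [m|]; [exists u | exists x].
Qed.

Lemma center_exists x : exists c, is_center x c.
Proof.
have [u dux] := lvl_attained x.
have [c dcx c_min] := @arg_minnP V u (fun c => du c x == Some (lvl x)) ID (introT eqP dux).
by exists c; rewrite /Defs.is_center dcx; apply/forallP => v; apply/implyP; apply: c_min.
Qed.

Lemma center_min x c u : is_center x c -> du u x = Some (lvl x) -> ID c <= ID u.
Proof. by move=> /andP[_ /forallP/(_ u)/implyP c_min] /eqP/c_min. Qed.

Lemma du_edge u x y m : du u x = Some m -> e x y ->
  exists2 m', du u y = Some m' & lvl y <= m' <= m.+1.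
Proof.
move=> /du_Some[d dux ->] /(dist_edge dux)[d' /du_dist duy le_d'].
by exists (r - delta u + d'); rewrite // (lvl_le_du duy) /=; lia.
Qed.

Lemma lvl_edge x y : e x y -> lvl y <= (lvl x).+1.
Proof.
move=> exy; have [u dux] := lvl_attained x.
by have [m' _ /andP[le1 le2]] := du_edge dux exy; apply: leq_trans le2.
Qed.

Definition candidate x u :=
  (du u x == Some (lvl x)) ||
  ((du u x == Some (lvl x).+1) && [exists c, is_center x c && (ID u < ID c)]).

Lemma candidate_spannerH x u : u != x -> candidate x u -> H x (pr u x).
Proof.
move=> ux cand; apply/orP; left; apply/orP; right.
by apply/existsP; exists u; rewrite ux eqxx.
Qed.

Lemma candidate_pred d x u :
  dist e u x = Some d.+1 -> candidate x u -> candidate (pr u x) u.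
Proof.
move=> dux; have [epx dup] := pr_pred (dist_succ_neq dux) dux.
set p := pr u x in epx dup *.
have le_lvl_x := lvl_edge epx; have le_lvl_p := lvl_le_du (du_dist dup).
rewrite /candidate (du_dist dup) (du_dist dux) /=.
case/orP=> [/eqP[lvl_x] | /andP[/eqP[lvl_x] /existsP[c /andP[cx lt_uc]]]].
  by apply/orP; left; apply/eqP; congr Some; lia.
have [lvl_p | lvl_p] := eqVneq (lvl p) (r - delta u + d).
  by rewrite lvl_p eqxx.
apply/orP; right; apply/andP; split; first by apply/eqP; congr Some; lia.
have [cp cpp] := center_exists p; apply/existsP; exists cp; rewrite cpp /=.
have [m' dcpx /andP[le1 le2]] := du_edge (eqP (andP cpp).1) epx.
have dcpx_lvl : du cp x = Some (lvl x) by rewrite dcpx; congr Some; lia.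
exact: leq_trans lt_uc (center_min cx dcpx_lvl).
Qed.

Lemma candidate_nbhd d x u : dist e u x = Some d -> candidate x u -> u \in nbhd H d x.
Proof.
elim: d x => [|d IH] x dux cand.
  by move: (dist_nbhd dux); rewrite in_set1 => /eqP ->; apply: nbhd_refl.
have ux := dist_succ_neq dux; have [_ dup] := pr_pred ux dux.
rewrite -add1n; apply: nbhd_trans (nbhd_edge (candidate_spannerH ux cand)) _.
exact: IH dup (candidate_pred dux cand).
Qed.

Lemma spannerH_sym : symmetric H.
Proof. by move=> a b; rewrite /spannerH orbC. Qed.

Lemma common_candidate_nbhd x y u dx dy :
  dist e u x = Some dx -> dist e u y = Some dy ->
  candidate x u -> candidate y u -> y \in nbhd H (dx + dy) x.
Proof.
move=> dux duy cx cy; apply: nbhd_trans (candidate_nbhd dux cx) _.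
exact: nbhd_sym spannerH_sym _ _ _ (candidate_nbhd duy cy).
Qed.

Lemma edge_stretch_centers x y cx cy : e x y -> is_center x cx -> is_center y cy ->
  ID cx <= ID cy -> y \in nbhd H (2 * r + 1) x.
Proof.
move=> exy cxx cyy le_c.
have [/eqP dcxx /eqP dcyy] := ((andP cxx).1, (andP cyy).1).
have [lvl_x lvl_y] := (lvl_le_r x, lvl_le_r y).
have cand_lvl u z : du u z = Some (lvl z) -> candidate z u.
  by rewrite /candidate => ->; rewrite eqxx.
case: (leqP (lvl x) (lvl y)) => lvl_xy.
- have [m dcxy /andP[le1 le2]] := du_edge dcxx exy.
  have cand_y : candidate y cx.
    rewrite /candidate dcxy; have [-> | ne] := eqVneq m (lvl y); first by rewrite eqxx.
    apply/orP; right; apply/andP; split; first by apply/eqP; congr Some; lia.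
    apply/existsP; exists cy; rewrite cyy ltn_neqAle le_c andbT.
    by apply: contra_neq ne => /ID_inj cxy; move: dcxy; rewrite cxy dcyy => -[].
  have [[dx distx eq_x] [dy disty eq_y]] := (du_Some dcxx, du_Some dcxy).
  have := common_candidate_nbhd distx disty (cand_lvl _ _ dcxx) cand_y.
  by apply: subsetP; apply: nbhd_mono; lia.
- have eyx : e y x by rewrite e_sym.
  have [m dcyx /andP[le1 le2]] := du_edge dcyy eyx.
  have dcyx_lvl : du cy x = Some (lvl x) by rewrite dcyx; congr Some; lia.
  have [[dx distx eq_x] [dy disty eq_y]] := (du_Some dcyx_lvl, du_Some dcyy).
  have := common_candidate_nbhd distx disty (cand_lvl _ _ dcyx_lvl) (cand_lvl _ _ dcyy).
  by apply: subsetP; apply: nbhd_mono; lia.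
Qed.

Lemma edge_stretch x y : e x y -> y \in nbhd H (2 * r + 1) x.
Proof.
move=> exy; have [cx cxx] := center_exists x; have [cy cyy] := center_exists y.
case: (leqP (ID cx) (ID cy)) => [le_c | /ltnW le_c].
  exact: edge_stretch_centers cxx cyy le_c.
apply: (nbhd_sym spannerH_sym); apply: edge_stretch_centers cyy cxx le_c.
by rewrite e_sym.
Qed.

End Clustering.

Theorem lemma10 (V : finType) (e : rel V)
  (e_sym : symmetric e) (e_irr : irreflexive e)
  (ID : V -> nat) (ID_inj : injective ID)
  (k : nat) (hk : 2 <= k)
  (delta : V -> nat) (hdelta : forall v, delta v <= k.-1)
  (pr : V -> V -> V) (hpr : is_pred_fun e pr) :
  forall u v : V,
    oleq_mul (dist (spannerH e ID k.-1 delta pr) u v) (2 * k - 1) (dist e u v).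
Proof.
have -> : 2 * k - 1 = 2 * k.-1 + 1 by lia.
exact: dist_stretch (edge_stretch _ _ e_sym ID_inj hpr).
Qed.
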